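(* Let $\sigma_0,\sigma_\epsilon,\sigma_1,\dots,\sigma_k>0$, $\Delta_1,\dots,\Delta_k\in\mathbb{R}$, and weights $\phi_\epsilon>0$, $\phi_1,\dots,\phi_k\ge0$ with $\phi_\epsilon+\sum_i\phi_i=1$. Let the prior be $\Theta\sim N(0,\sigma_0^2)$ and the signal likelihood be the Gaussian mixture $$l_{X|\Theta}(x\mid\theta)=\phi_\epsilon\,\varphi(x;\theta,\sigma_\epsilon^2)+\sum_{i=1}^k\phi_i\,\varphi(x;\Delta_i,\sigma_i^2),$$ where $\varphi(x;\mu,s^2)$ is the $N(\mu,s^2)$ density. Let $\theta_1(x)$ be the posterior mean of $\Theta$ given $X=x$. Then the DeGroot coefficient $\omega_m=\frac{d\theta_1}{dx}\big|_{x=0}$ is $$\omega_m=\frac{\omega_{nm}}{1+\sum_{i=1}^k\frac{\phi_i}{\phi_\epsilon}\frac{\sqrt{\sigma_0^2+\sigma_\epsilon^2}}{\sigma_i}\exp\!\bigl(-\frac{\Delta_i^2}{2\sigma_i^2}\bigr)},\qquad \omega_{nm}=\frac{\sigma_0^2}{\sigma_0^2+\sigma_\epsilon^2}.$$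
   Context: The posterior mean is $\theta_1(x)=\frac{\int\theta f_\Theta(\theta)l_{X|\Theta}(x\mid\theta)d\theta}{\int f_\Theta(\theta)l_{X|\Theta}(x\mid\theta)d\theta}$ with $f_\Theta$ the $N(0,\sigma_0^2)$ density. *)

From Stdlib Require Import Reals.
From Coquelicot Require Import Coquelicot.
Open Scope R_scope.

Fixpoint fsum (k : nat) (f : nat -> R) : R :=
  match k with
  | O => 0
  | S n => fsum n f + f n
  end.

Definition gauss (mu s x : R) : R :=
  / (s * sqrt (2 * PI)) * exp (- (x - mu) ^ 2 / (2 * s ^ 2)).

(* Gaussian-mixture likelihood l_{X|Theta}(x | theta); mixture components indexed 0..k-1 *)
Definition lik (k : nat) (phie se : R) (phi Delta sig : nat -> R) (x theta : R) : R :=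
  phie * gauss theta se x + fsum k (fun i => phi i * gauss (Delta i) (sig i) x).

Definition post_mean (s0 : R) (k : nat) (phie se : R) (phi Delta sig : nat -> R) (x : R) : R :=
  RInt_gen (fun t => t * gauss 0 s0 t * lik k phie se phi Delta sig x t)
           (Rbar_locally m_infty) (Rbar_locally p_infty)
  / RInt_gen (fun t => gauss 0 s0 t * lik k phie se phi Delta sig x t)
           (Rbar_locally m_infty) (Rbar_locally p_infty).

(* Normal-normal conjugacy,
     phi(t; 0, s0^2) phi(x; t, se^2) = phi(x; 0, s0^2 + se^2) phi(t; mu(x), tau^2)
   with mu(x) = x s0^2 / (s0^2 + se^2), computes both integrals of the posterior mean in
   closed form.  The outlier components do not depend on theta, so they only add their
   density L(x) times the prior's mass 1 and mean 0.  Writing m(x) = phi(x; 0, s0^2 + se^2),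
   this gives theta_1(x) = x * w(x) with
     w(x) = s0^2 / (s0^2 + se^2) * phie m(x) / (phie m(x) + L(x)),
   so theta_1'(0) = w(0), and L(0) / (phie m(0)) is the sum in the denominator of the
   formula. *)

From Stdlib Require Import Reals Lra Lia.
From Coquelicot Require Import Coquelicot.
Open Scope R_scope.

Local Notation is_RInt_line f l :=
  (is_RInt_gen f (Rbar_locally m_infty) (Rbar_locally p_infty) l).

Lemma continuous_of_ex_derive (f : R -> R) x : ex_derive f x -> continuous f x.
Proof. apply (@ex_derive_continuous R_AbsRing R_NormedModule). Qed.

Lemma ex_RInt_of_continuous (f : R -> R) a b : (forall z, continuous f z) -> ex_RInt f a b.
Proof. intros Hf. apply (@ex_RInt_continuous R_CompleteNormedModule). intros; apply Hf. Qed.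

Lemma derive_0_constant (f : R -> R) x y : (forall z, is_derive f z 0) -> f x = f y.
Proof.
  intros Hf.
  assert (H : is_RInt (fun _ => 0) y x (minus (f x) (f y))).
  { apply (@is_RInt_derive R_CompleteNormedModule); intros; [apply Hf | apply continuous_const]. }
  apply (@is_RInt_unique R_CompleteNormedModule) in H. rewrite RInt_const in H.
  unfold minus, plus, opp, scal in H; simpl in H; unfold mult in H; simpl in H. lra.
Qed.

Lemma is_lim_affine_infty c a (z : Rbar) : 0 < a -> z = p_infty \/ z = m_infty ->
  is_lim (fun x => (x - c) / a) z z.
Proof.
  intros Ha Hz. assert (Hdiv : forall x, (x - c) / a * a = x - c) by (intros; field; lra).
  destruct Hz as [-> | ->]; intros P [M HM]; exists (M * a + c); intros x Hx; apply HM;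
    apply (Rmult_lt_reg_r a); rewrite ?Hdiv; lra.
Qed.

Lemma is_lim_neg_sqr_infty (z : Rbar) : z = p_infty \/ z = m_infty ->
  is_lim (fun y => - y ^ 2) z m_infty.
Proof.
  intros Hz. apply (is_lim_ext (fun y => - (y * y))); [intros; ring |].
  change m_infty with (Rbar_opp p_infty). apply is_lim_opp.
  assert (H : is_lim (fun y => y * y) z (Rbar_mult z z)).
  { apply is_lim_mult; try apply is_lim_id. destruct Hz as [-> | ->]; simpl; auto. }
  destruct Hz as [-> | ->]; exact H.
Qed.

Lemma is_RInt_line_of_primitive (F f : R -> R) (la lb l : R) :
  (forall x, is_derive F x (f x)) -> (forall x, continuous f x) ->
  is_lim F m_infty la -> is_lim F p_infty lb -> lb - la = l -> is_RInt_line f l.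
Proof.
  intros HF Hc Hm Hp <-.
  assert (HD : forall x, Derive F x = f x) by (intros; apply is_derive_unique, HF).
  apply (is_RInt_gen_ext (Derive F)).
  { apply filter_forall. intros ab x _. apply HD. }
  apply is_RInt_gen_Derive; try assumption; apply filter_forall; intros ab x _.
  - eexists; apply HF.
  - apply (continuous_ext f); [intros; symmetry; apply HD | apply Hc].
Qed.

Lemma is_RInt_line_ext (f g : R -> R) l : (forall t, f t = g t) ->
  is_RInt_line f l -> is_RInt_line g l.
Proof. intros Hfg. apply is_RInt_gen_ext, filter_forall. intros; apply Hfg. Qed.

Lemma is_RInt_line_scal (f : R -> R) c l : is_RInt_line f l ->
  is_RInt_line (fun t => c * f t) (c * l).
Proof. apply (is_RInt_gen_scal f c l). Qed.

Lemma is_RInt_line_lin (f g : R -> R) a b p q : is_RInt_line f a -> is_RInt_line g b ->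
  is_RInt_line (fun t => p * f t + q * g t) (p * a + q * b).
Proof.
  intros Hf Hg.
  exact (is_RInt_gen_plus _ _ _ _ (is_RInt_line_scal _ p _ Hf) (is_RInt_line_scal _ q _ Hg)).
Qed.

Lemma is_derive_id_mul_0 (g : R -> R) : ex_derive g 0 -> is_derive (fun x => x * g x) 0 (g 0).
Proof.
  intros [dg Hdg].
  assert (Hprod := @is_derive_mult R_AbsRing (fun x => x) g 0 1 dg
                     (@is_derive_id R_AbsRing 0) Hdg ltac:(intros; apply Rmult_comm)).
  unfold plus, mult in Hprod; simpl in Hprod; unfold mult in Hprod; simpl in Hprod.
  now replace (g 0) with (1 * g 0 + 0 * dg) by ring.
Qed.

Lemma fsum_ge0 k f : (forall i, (i < k)%nat -> 0 <= f i) -> 0 <= fsum k f.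
Proof.
  induction k as [| k IH]; intros Hf; simpl; [lra |].
  apply Rplus_le_le_0_compat; [apply IH; intros; apply Hf |apply Hf]; lia.
Qed.

Lemma fsum_ext k f g : (forall i, (i < k)%nat -> f i = g i) -> fsum k f = fsum k g.
Proof.
  induction k as [| k IH]; intros Hfg; simpl; [reflexivity |].
  rewrite IH, (Hfg k); [reflexivity | lia | intros; apply Hfg; lia].
Qed.

Lemma fsum_scal k c f : fsum k (fun i => c * f i) = c * fsum k f.
Proof. induction k as [| k IH]; simpl; [ring | rewrite IH; ring]. Qed.

Lemma ex_derive_fsum k (f : nat -> R -> R) x : (forall i, ex_derive (f i) x) ->
  ex_derive (fun y => fsum k (fun i => f i y)) x.
Proof.
  intros Hf. induction k as [| k IH]; simpl; [apply ex_derive_const |].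
  apply (@ex_derive_plus R_AbsRing R_NormedModule); [exact IH | apply Hf].
Qed.

(** * The Gaussian integral *)

Definition gauss_fun (t : R) := exp (- t ^ 2).
Definition integral0_gauss (x : R) := RInt gauss_fun 0 x.

Lemma continuous_gauss_fun x : continuous gauss_fun x.
Proof. apply continuous_of_ex_derive. unfold gauss_fun. auto_derive. easy. Qed.

Lemma ex_RInt_gauss_fun a b : ex_RInt gauss_fun a b.
Proof. apply ex_RInt_of_continuous, continuous_gauss_fun. Qed.

Lemma is_derive_integral0_gauss x : is_derive integral0_gauss x (gauss_fun x).
Proof.
  apply (is_derive_RInt gauss_fun integral0_gauss 0); [| apply continuous_gauss_fun].
  apply filter_forall. intros b.
  apply (@RInt_correct R_CompleteNormedModule), ex_RInt_gauss_fun.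
Qed.

Lemma is_lim_gauss_fun_infty (z : Rbar) : z = p_infty \/ z = m_infty -> is_lim gauss_fun z 0.
Proof.
  intros Hz. unfold gauss_fun.
  eapply is_lim_comp; [apply is_lim_exp_m | apply is_lim_neg_sqr_infty, Hz |].
  destruct Hz as [-> | ->]; exists 0; intros; discriminate.
Qed.

(* The classical proof: [integral01_u x + integral0_gauss x ^ 2] has derivative 0, equals
   [atan 1 = PI / 4] at [x = 0], and [integral01_u x <= gauss_fun x] vanishes at infinity. *)
Definition gauss_u (x t : R) := exp (- x ^ 2 * (1 + t ^ 2)) / (1 + t ^ 2).
Definition integral01_u (x : R) := RInt (gauss_u x) 0 1.

Lemma is_derive_gauss_u x t :
  is_derive (fun z => gauss_u z t) x (- 2 * x * exp (- x ^ 2 * (1 + t ^ 2))).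
Proof.
  unfold gauss_u. auto_derive; [nra |].
  replace (- x ^ 2 * (1 + t ^ 2)) with (- (x * (x * 1)) * (1 + t * (t * 1))) by ring.
  field. nra.
Qed.

Lemma continuous_gauss_u x t : continuous (gauss_u x) t.
Proof. apply continuous_of_ex_derive. unfold gauss_u. auto_derive. nra. Qed.

Lemma continuity_2d_pt_partial_gauss_u x t :
  continuity_2d_pt (fun a b => - 2 * a * exp (- a ^ 2 * (1 + b ^ 2))) x t.
Proof.
  apply continuity_2d_pt_mult.
  - apply continuity_2d_pt_mult; [apply continuity_2d_pt_const | apply continuity_2d_pt_id1].
  - apply (continuity_1d_2d_pt_comp exp); [apply derivable_continuous_pt, derivable_pt_exp |].
    apply (continuity_2d_pt_ext (fun a b => - (a * a) * (1 + b * b))); [intros; ring |].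
    apply continuity_2d_pt_mult.
    + apply continuity_2d_pt_opp, continuity_2d_pt_mult; apply continuity_2d_pt_id1.
    + apply continuity_2d_pt_plus; [apply continuity_2d_pt_const |].
      apply continuity_2d_pt_mult; apply continuity_2d_pt_id2.
Qed.

Lemma is_derive_integral01_u x :
  is_derive integral01_u x (-2 * gauss_fun x * integral0_gauss x).
Proof.
  assert (HD : forall z t, Derive (fun y => gauss_u y t) z = - 2 * z * exp (- z ^ 2 * (1 + t ^ 2)))
    by (intros; apply is_derive_unique, is_derive_gauss_u).
  unfold integral01_u.
  replace (-2 * gauss_fun x * integral0_gauss x)
    with (RInt (fun t => Derive (fun y => gauss_u y t) x) 0 1).
  { apply is_derive_RInt_param.
    - apply filter_forall. intros z t _. eexists. apply is_derive_gauss_u.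
    - intros t _. eapply continuity_2d_pt_ext; [intros a b; symmetry; apply HD |].
      apply continuity_2d_pt_partial_gauss_u.
    - apply filter_forall. intros y. apply ex_RInt_of_continuous, continuous_gauss_u. }
  (* substitute [s = x t] *)
  rewrite (RInt_ext _ (fun t => scal (-2 * gauss_fun x) (scal x (gauss_fun (x * t + 0))))).
  - rewrite (@RInt_scal R_CompleteNormedModule), (@RInt_comp_lin R_CompleteNormedModule);
      [| apply ex_RInt_gauss_fun | apply (ex_RInt_comp_lin gauss_fun), ex_RInt_gauss_fun].
    unfold integral0_gauss. rewrite Rmult_0_r, Rmult_1_r, !Rplus_0_r. reflexivity.
  - intros t _. rewrite HD. unfold scal; simpl; unfold mult; simpl. unfold gauss_fun.
    replace (exp (- (x * (x * 1)) * (1 + t * (t * 1))))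
      with (exp (- x ^ 2) * exp (- (x * t + 0) ^ 2)) by (rewrite <- exp_plus; f_equal; ring).
    ring.
Qed.

Lemma integral01_u_add_sqr x : integral01_u x + integral0_gauss x ^ 2 = PI / 4.
Proof.
  rewrite (derive_0_constant (fun z => integral01_u z + integral0_gauss z ^ 2) x 0).
  - unfold integral01_u, integral0_gauss. rewrite RInt_point. unfold zero; simpl.
    rewrite (RInt_ext _ (fun t => / (1 + t ^ 2))).
    2:{ intros t _. unfold gauss_u. replace (- 0 ^ 2 * (1 + t ^ 2)) with 0 by ring.
        rewrite exp_0. unfold Rdiv. apply Rmult_1_l. }
    rewrite (is_RInt_unique _ 0 1 (minus (atan 1) (atan 0))).
    + rewrite atan_1, atan_0. unfold minus, plus, opp; simpl. ring.
    + apply (@is_RInt_derive R_CompleteNormedModule atan).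
      * intros t _. replace (t ^ 2) with (t²) by (unfold Rsqr; ring). apply is_derive_atan.
      * intros t _. apply continuous_of_ex_derive. auto_derive. nra.
  - intros z. eapply is_derive_ext; [intros; reflexivity |].
    replace 0 with (-2 * gauss_fun z * integral0_gauss z
                    + INR 2 * gauss_fun z * integral0_gauss z ^ 1) by (simpl; ring).
    apply (@is_derive_plus R_AbsRing R_NormedModule);
      [apply is_derive_integral01_u | apply is_derive_pow, is_derive_integral0_gauss].
Qed.

Lemma integral01_u_bounds x : 0 <= integral01_u x <= gauss_fun x.
Proof.
  assert (Hex : ex_RInt (gauss_u x) 0 1) by apply ex_RInt_of_continuous, continuous_gauss_u.
  unfold integral01_u. split.
  - apply RInt_ge_0; [lra | exact Hex |]. intros t _.
    apply Rdiv_le_0_compat; [apply Rlt_le, exp_pos | nra].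
  - replace (gauss_fun x) with (RInt (fun _ => gauss_fun x) 0 1)
      by (rewrite RInt_const; unfold scal; simpl; unfold mult; simpl; ring).
    apply RInt_le; [lra | exact Hex | apply ex_RInt_const |]. intros t Ht.
    unfold gauss_u, gauss_fun, Rdiv.
    assert (Hinv : / (1 + t ^ 2) <= 1) by (rewrite <- Rinv_1; apply Rinv_le_contravar; nra).
    assert (Hexp : exp (- x ^ 2 * (1 + t ^ 2)) <= exp (- x ^ 2)).
    { destruct (Rle_lt_or_eq_dec (- x ^ 2 * (1 + t ^ 2)) (- x ^ 2)) as [Hlt | ->]; [nra | |].
      - left; apply exp_increasing, Hlt.
      - right; reflexivity. }
    assert (0 < exp (- x ^ 2 * (1 + t ^ 2))) by apply exp_pos.
    nra.
Qed.

Lemma integral0_gauss_ge0 x : 0 <= x -> 0 <= integral0_gauss x.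
Proof.
  intros Hx. apply RInt_ge_0; [exact Hx | apply ex_RInt_gauss_fun |].
  intros; apply Rlt_le, exp_pos.
Qed.

Lemma integral0_gauss_opp x : integral0_gauss (- x) = - integral0_gauss x.
Proof.
  assert (H : is_RInt (fun y => opp (gauss_fun (- y))) 0 x (RInt gauss_fun (- 0) (- x))).
  { apply (@is_RInt_comp_opp R_NormedModule), (@RInt_correct R_CompleteNormedModule).
    apply ex_RInt_gauss_fun. }
  rewrite Ropp_0 in H. unfold integral0_gauss. rewrite <- (is_RInt_unique _ _ _ _ H).
  rewrite (RInt_ext _ (fun y => opp (gauss_fun y))).
  - apply (@RInt_opp R_CompleteNormedModule), ex_RInt_gauss_fun.
  - intros. unfold gauss_fun. do 3 f_equal. ring.
Qed.

Lemma is_lim_integral0_gauss_p_infty : is_lim integral0_gauss p_infty (sqrt PI / 2).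
Proof.
  assert (H0 : is_lim integral01_u p_infty 0).
  { apply (is_lim_le_le_loc (fun _ => 0) gauss_fun).
    - exists 0. intros; apply integral01_u_bounds.
    - apply is_lim_const.
    - apply is_lim_gauss_fun_infty; auto. }
  replace (sqrt PI / 2) with (sqrt (PI / 4 - 0)).
  2:{ replace (PI / 4 - 0) with ((sqrt PI / 2) ^ 2)
        by (unfold Rdiv; rewrite Rpow_mult_distr, pow2_sqrt by (apply Rlt_le, PI_RGT_0); field).
      apply sqrt_pow2. assert (0 <= sqrt PI) by apply sqrt_pos. lra. }
  apply (is_lim_ext_loc (fun x => sqrt (PI / 4 - integral01_u x))).
  - exists 0. intros x Hx. rewrite <- (integral01_u_add_sqr x).
    replace (integral01_u x + integral0_gauss x ^ 2 - integral01_u x)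
      with (integral0_gauss x ^ 2) by ring.
    apply sqrt_pow2, integral0_gauss_ge0. lra.
  - apply (is_lim_comp_continuous _ (fun y => sqrt (PI / 4 - y))); [exact H0 |].
    apply (continuous_comp (fun y => PI / 4 - y) sqrt); [| apply continuous_sqrt].
    apply continuous_of_ex_derive. auto_derive. easy.
Qed.

Lemma is_lim_integral0_gauss_m_infty : is_lim integral0_gauss m_infty (- (sqrt PI / 2)).
Proof.
  apply (is_lim_ext (fun x => - integral0_gauss (- x))).
  { intros. rewrite integral0_gauss_opp. ring. }
  change (Finite (- (sqrt PI / 2))) with (Rbar_opp (sqrt PI / 2)). apply is_lim_opp.
  eapply is_lim_comp; [apply is_lim_integral0_gauss_p_infty | |].
  - change p_infty with (Rbar_opp m_infty). apply is_lim_opp, is_lim_id.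
  - exists 0. intros; discriminate.
Qed.

(** * Normal densities *)

Lemma sqrt2_gt0 : 0 < sqrt 2.
Proof. apply sqrt_lt_R0. lra. Qed.

Lemma sqrtPI_gt0 : 0 < sqrt PI.
Proof. apply sqrt_lt_R0, PI_RGT_0. Qed.

Lemma sqrt_2PI_gt0 : 0 < sqrt (2 * PI).
Proof. apply sqrt_lt_R0. assert (H := PI_RGT_0). lra. Qed.

Lemma gauss_gt0 mu s x : 0 < s -> 0 < gauss mu s x.
Proof.
  intros Hs. assert (H := sqrt_2PI_gt0).
  apply Rmult_lt_0_compat; [apply Rinv_0_lt_compat; nra | apply exp_pos].
Qed.

Lemma gauss_E mu s x : 0 < s ->
  gauss mu s x = gauss_fun ((x - mu) / (s * sqrt 2)) / (s * sqrt 2 * sqrt PI).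
Proof.
  intros Hs. assert (H2 := sqrt2_gt0). assert (HP := sqrtPI_gt0).
  unfold gauss, gauss_fun. rewrite sqrt_mult by (try apply Rlt_le, PI_RGT_0; lra).
  replace (- ((x - mu) / (s * sqrt 2)) ^ 2) with (- (x - mu) ^ 2 / (2 * s ^ 2)).
  - field. lra.
  - unfold Rdiv. rewrite Rpow_mult_distr, pow_inv, Rpow_mult_distr, pow2_sqrt by lra.
    field. lra.
Qed.

Lemma ex_derive_gauss mu s x : ex_derive (gauss mu s) x.
Proof. unfold gauss. auto_derive. easy. Qed.

Lemma is_derive_gauss mu s x : 0 < s ->
  is_derive (gauss mu s) x (- (x - mu) / s ^ 2 * gauss mu s x).
Proof.
  intros Hs. unfold gauss.
  replace (- (x - mu) / s ^ 2 * (/ (s * sqrt (2 * PI)) * exp (- (x - mu) ^ 2 / (2 * s ^ 2))))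
    with (/ (s * sqrt (2 * PI)) * (- (x - mu) / s ^ 2 * exp (- (x - mu) ^ 2 / (2 * s ^ 2))))
    by ring.
  apply is_derive_scal, (is_derive_comp exp (fun y => - (y - mu) ^ 2 / (2 * s ^ 2)));
    [apply is_derive_exp | auto_derive; [easy | field; lra]].
Qed.

Lemma is_lim_gauss_infty mu s (z : Rbar) : 0 < s -> z = p_infty \/ z = m_infty ->
  is_lim (gauss mu s) z 0.
Proof.
  intros Hs Hz. assert (H2 := sqrt2_gt0). assert (HP := sqrtPI_gt0).
  apply (is_lim_ext (fun x => / (s * sqrt 2 * sqrt PI) * gauss_fun ((x - mu) / (s * sqrt 2)))).
  { intros. rewrite gauss_E by exact Hs. apply Rmult_comm. }
  replace (Finite 0) with (Rbar_mult (/ (s * sqrt 2 * sqrt PI)) 0) by (simpl; f_equal; ring).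
  apply is_lim_scal_l. eapply is_lim_comp.
  - apply is_lim_gauss_fun_infty, Hz.
  - apply is_lim_affine_infty; [nra | exact Hz].
  - destruct Hz as [-> | ->]; exists 0; intros; discriminate.
Qed.

(* [gauss_primitive mu s] is the normal distribution function minus [1 / 2]. *)
Definition gauss_primitive (mu s x : R) := integral0_gauss ((x - mu) / (s * sqrt 2)) / sqrt PI.

Lemma is_derive_gauss_primitive mu s x : 0 < s ->
  is_derive (gauss_primitive mu s) x (gauss mu s x).
Proof.
  intros Hs. assert (H2 := sqrt2_gt0). assert (HP := sqrtPI_gt0).
  assert (Hlin : is_derive (fun y => (y - mu) / (s * sqrt 2)) x (/ (s * sqrt 2)))
    by (auto_derive; [nra | field; nra]).
  assert (H := is_derive_comp _ _ x _ _ (is_derive_integral0_gauss _) Hlin).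
  apply (is_derive_ext (fun y => / sqrt PI * integral0_gauss ((y - mu) / (s * sqrt 2)))).
  { intros. unfold gauss_primitive. apply Rmult_comm. }
  rewrite gauss_E by exact Hs.
  replace (gauss_fun ((x - mu) / (s * sqrt 2)) / (s * sqrt 2 * sqrt PI))
    with (/ sqrt PI * (/ (s * sqrt 2) * gauss_fun ((x - mu) / (s * sqrt 2)))) by (field; nra).
  apply is_derive_scal, H.
Qed.

Lemma is_lim_gauss_primitive mu s (z : Rbar) l : 0 < s ->
  (z = p_infty /\ l = 1 / 2) \/ (z = m_infty /\ l = - (1 / 2)) ->
  is_lim (gauss_primitive mu s) z l.
Proof.
  intros Hs Hzl. assert (H2 := sqrt2_gt0). assert (HP := sqrtPI_gt0).
  apply (is_lim_ext (fun x => / sqrt PI * integral0_gauss ((x - mu) / (s * sqrt 2)))).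
  { intros. unfold gauss_primitive. apply Rmult_comm. }
  assert (Hz : z = p_infty \/ z = m_infty) by (destruct Hzl as [[-> _] | [-> _]]; auto).
  assert (Hlin := is_lim_affine_infty mu (s * sqrt 2) z ltac:(nra) Hz).
  (* Without [Finite], the coercion [real : Rbar -> R] would make this an equation in [R]. *)
  assert (Hnear : Rbar_locally' z (fun y => Finite ((y - mu) / (s * sqrt 2)) <> z))
    by (destruct Hz as [-> | ->]; exists 0; intros; discriminate).
  destruct Hzl as [[-> ->] | [-> ->]].
  - replace (1 / 2) with (/ sqrt PI * (sqrt PI / 2)) by (field; lra).
    apply (is_lim_scal_l _ _ _ (sqrt PI / 2)).
    exact (is_lim_comp _ _ _ _ _ is_lim_integral0_gauss_p_infty Hlin Hnear).
  - replace (- (1 / 2)) with (/ sqrt PI * - (sqrt PI / 2)) by (field; lra).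
    apply (is_lim_scal_l _ _ _ (- (sqrt PI / 2))).
    exact (is_lim_comp _ _ _ _ _ is_lim_integral0_gauss_m_infty Hlin Hnear).
Qed.

Lemma is_RInt_line_gauss mu s : 0 < s -> is_RInt_line (gauss mu s) 1.
Proof.
  intros Hs. apply (is_RInt_line_of_primitive (gauss_primitive mu s) _ (- (1 / 2)) (1 / 2)).
  - intros; apply is_derive_gauss_primitive, Hs.
  - intros; apply continuous_of_ex_derive, ex_derive_gauss.
  - apply is_lim_gauss_primitive; auto.
  - apply is_lim_gauss_primitive; auto.
  - field.
Qed.

Lemma is_RInt_line_gauss_mean mu s : 0 < s -> is_RInt_line (fun t => t * gauss mu s t) mu.
Proof.
  intros Hs.
  set (G := fun t => mu * gauss_primitive mu s t - s ^ 2 * gauss mu s t).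
  assert (HG : forall z l, (z = p_infty /\ l = 1 / 2) \/ (z = m_infty /\ l = - (1 / 2)) ->
                 is_lim G z (mu * l - s ^ 2 * 0)).
  { intros z l Hzl. apply is_lim_minus'.
    - exact (is_lim_scal_l _ mu _ l (is_lim_gauss_primitive mu s z l Hs Hzl)).
    - refine (is_lim_scal_l _ (s ^ 2) _ 0 (is_lim_gauss_infty mu s z Hs _)).
      destruct Hzl as [[-> _] | [-> _]]; auto. }
  apply (is_RInt_line_of_primitive G _ (mu * - (1 / 2) - s ^ 2 * 0) (mu * (1 / 2) - s ^ 2 * 0)).
  - intros t. unfold G.
    replace (t * gauss mu s t)
      with (mu * gauss mu s t - s ^ 2 * (- (t - mu) / s ^ 2 * gauss mu s t)) by (field; lra).
    apply (@is_derive_minus R_AbsRing R_NormedModule); apply is_derive_scal;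
      [apply is_derive_gauss_primitive | apply is_derive_gauss]; exact Hs.
  - intros t. apply continuous_of_ex_derive, ex_derive_mult;
      [apply ex_derive_id | apply ex_derive_gauss].
  - apply HG; auto.
  - apply HG; auto.
  - field.
Qed.

Lemma gauss_conjugate m0 s0 se x t : 0 < s0 -> 0 < se ->
  gauss m0 s0 t * gauss t se x =
  gauss m0 (sqrt (s0 ^ 2 + se ^ 2)) x *
  gauss ((m0 * se ^ 2 + x * s0 ^ 2) / (s0 ^ 2 + se ^ 2)) (s0 * se / sqrt (s0 ^ 2 + se ^ 2)) t.
Proof.
  intros H0 He.
  assert (HS2 : sqrt (s0 ^ 2 + se ^ 2) ^ 2 = s0 ^ 2 + se ^ 2) by (apply pow2_sqrt; nra).
  assert (HS : 0 < sqrt (s0 ^ 2 + se ^ 2)) by (apply sqrt_lt_R0; nra).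
  assert (Hr := sqrt_2PI_gt0).
  set (S := sqrt (s0 ^ 2 + se ^ 2)) in *.
  assert (Htau2 : (s0 * se / S) ^ 2 = s0 ^ 2 * se ^ 2 / (s0 ^ 2 + se ^ 2))
    by (rewrite <- HS2; field; lra).
  unfold gauss. set (r := sqrt (2 * PI)) in *.
  transitivity (/ (s0 * r) * / (se * r) *
                exp (- (t - m0) ^ 2 / (2 * s0 ^ 2) + - (x - t) ^ 2 / (2 * se ^ 2))).
  { rewrite exp_plus. ring. }
  transitivity (/ (S * r) * / (s0 * se / S * r) *
                exp (- (x - m0) ^ 2 / (2 * S ^ 2) +
                     - (t - (m0 * se ^ 2 + x * s0 ^ 2) / (s0 ^ 2 + se ^ 2)) ^ 2
                       / (2 * (s0 * se / S) ^ 2))).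
  2:{ rewrite exp_plus. ring. }
  f_equal; [field; repeat split; lra |].
  apply f_equal. rewrite Htau2, HS2. field. repeat split; nra.
Qed.

Section Evidence.
Variables (m0 s0 se x : R).
Hypotheses (Hs0 : 0 < s0) (Hse : 0 < se).

Lemma scale_conjugate_gt0 : 0 < s0 * se / sqrt (s0 ^ 2 + se ^ 2).
Proof. apply Rdiv_lt_0_compat; [nra | apply sqrt_lt_R0; nra]. Qed.

Lemma is_RInt_line_evidence :
  is_RInt_line (fun t => gauss m0 s0 t * gauss t se x) (gauss m0 (sqrt (s0 ^ 2 + se ^ 2)) x).
Proof.
  assert (H := is_RInt_line_scal _ (gauss m0 (sqrt (s0 ^ 2 + se ^ 2)) x) _
                 (is_RInt_line_gauss ((m0 * se ^ 2 + x * s0 ^ 2) / (s0 ^ 2 + se ^ 2)) _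
                    scale_conjugate_gt0)).
  rewrite Rmult_1_r in H.
  refine (is_RInt_line_ext _ _ _ _ H). intros t. symmetry. apply gauss_conjugate; assumption.
Qed.

Lemma is_RInt_line_evidence_mean :
  is_RInt_line (fun t => t * (gauss m0 s0 t * gauss t se x))
    ((m0 * se ^ 2 + x * s0 ^ 2) / (s0 ^ 2 + se ^ 2) * gauss m0 (sqrt (s0 ^ 2 + se ^ 2)) x).
Proof.
  assert (H := is_RInt_line_scal _ (gauss m0 (sqrt (s0 ^ 2 + se ^ 2)) x) _
                 (is_RInt_line_gauss_mean ((m0 * se ^ 2 + x * s0 ^ 2) / (s0 ^ 2 + se ^ 2)) _
                    scale_conjugate_gt0)).
  replace ((m0 * se ^ 2 + x * s0 ^ 2) / (s0 ^ 2 + se ^ 2) * gauss m0 (sqrt (s0 ^ 2 + se ^ 2)) x)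
    with (gauss m0 (sqrt (s0 ^ 2 + se ^ 2)) x * ((m0 * se ^ 2 + x * s0 ^ 2) / (s0 ^ 2 + se ^ 2)))
    by ring.
  refine (is_RInt_line_ext _ _ _ _ H). intros t. rewrite gauss_conjugate by assumption. ring.
Qed.

End Evidence.

(** * The posterior mean *)

Definition outlier_lik (k : nat) (phi Delta sig : nat -> R) (x : R) : R :=
  fsum k (fun i => phi i * gauss (Delta i) (sig i) x).

(* The factor of [x] in the posterior mean; [gauss 0 (sqrt (s0 ^ 2 + se ^ 2))] is the
   marginal density of the signal under the non-outlier component. *)
Definition degroot_weight (s0 : R) (k : nat) (phie se : R) (phi Delta sig : nat -> R) (x : R) :=
  s0 ^ 2 / (s0 ^ 2 + se ^ 2) * (phie * gauss 0 (sqrt (s0 ^ 2 + se ^ 2)) x)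
  / (phie * gauss 0 (sqrt (s0 ^ 2 + se ^ 2)) x + outlier_lik k phi Delta sig x).

Section Posterior.
Variables (s0 se phie : R) (k : nat) (phi Delta sig : nat -> R).
Hypotheses (Hs0 : 0 < s0) (Hse : 0 < se) (Hphie : 0 < phie)
  (Hsig : forall i, (i < k)%nat -> 0 < sig i) (Hphi : forall i, (i < k)%nat -> 0 <= phi i).

Lemma outlier_lik_ge0 x : 0 <= outlier_lik k phi Delta sig x.
Proof.
  apply fsum_ge0. intros i Hi.
  apply Rmult_le_pos; [apply Hphi, Hi | apply Rlt_le, gauss_gt0, Hsig, Hi].
Qed.

Lemma marginal_gt0 x :
  0 < phie * gauss 0 (sqrt (s0 ^ 2 + se ^ 2)) x + outlier_lik k phi Delta sig x.
Proof.
  assert (Hm : 0 < gauss 0 (sqrt (s0 ^ 2 + se ^ 2)) x) by (apply gauss_gt0, sqrt_lt_R0; nra).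
  assert (HL := outlier_lik_ge0 x). nra.
Qed.

Lemma post_mean_E x :
  post_mean s0 k phie se phi Delta sig x = x * degroot_weight s0 k phie se phi Delta sig x.
Proof.
  set (m := gauss 0 (sqrt (s0 ^ 2 + se ^ 2)) x).
  set (L := outlier_lik k phi Delta sig x).
  assert (Hnum : is_RInt_line (fun t => t * gauss 0 s0 t * lik k phie se phi Delta sig x t)
                   (phie * ((0 * se ^ 2 + x * s0 ^ 2) / (s0 ^ 2 + se ^ 2) * m) + L * 0)).
  { refine (is_RInt_line_ext _ _ _ _
              (is_RInt_line_lin _ _ _ _ phie L (is_RInt_line_evidence_mean 0 s0 se x Hs0 Hse)
                 (is_RInt_line_gauss_mean 0 s0 Hs0))).
    intros t. unfold lik. fold (outlier_lik k phi Delta sig x). fold L. ring. }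
  assert (Hden : is_RInt_line (fun t => gauss 0 s0 t * lik k phie se phi Delta sig x t)
                   (phie * m + L * 1)).
  { refine (is_RInt_line_ext _ _ _ _
              (is_RInt_line_lin _ _ _ _ phie L (is_RInt_line_evidence 0 s0 se x Hs0 Hse)
                 (is_RInt_line_gauss 0 s0 Hs0))).
    intros t. unfold lik. fold (outlier_lik k phi Delta sig x). fold L. ring. }
  unfold post_mean. rewrite (is_RInt_gen_unique _ _ Hnum), (is_RInt_gen_unique _ _ Hden).
  assert (Hpos := marginal_gt0 x). fold m L in Hpos.
  unfold degroot_weight. fold m L. field. split; [nra | lra].
Qed.

Lemma ex_derive_degroot_weight x : ex_derive (degroot_weight s0 k phie se phi Delta sig) x.
Proof.
  assert (Hm : forall y, ex_derive (fun z => phie * gauss 0 (sqrt (s0 ^ 2 + se ^ 2)) z) y)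
    by (intros; apply ex_derive_scal, ex_derive_gauss).
  apply ex_derive_div.
  - apply ex_derive_scal, Hm.
  - apply (@ex_derive_plus R_AbsRing R_NormedModule); [apply Hm |].
    apply (ex_derive_fsum k (fun i y => phi i * gauss (Delta i) (sig i) y)).
    intros; apply ex_derive_scal, ex_derive_gauss.
  - apply Rgt_not_eq, marginal_gt0.
Qed.

Lemma degroot_weight_0 :
  degroot_weight s0 k phie se phi Delta sig 0 =
  (s0 ^ 2 / (s0 ^ 2 + se ^ 2)) /
  (1 + fsum k (fun i => phi i / phie * (sqrt (s0 ^ 2 + se ^ 2) / sig i)
                        * exp (- Delta i ^ 2 / (2 * sig i ^ 2)))).
Proof.
  assert (HS : 0 < sqrt (s0 ^ 2 + se ^ 2)) by (apply sqrt_lt_R0; nra).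
  assert (Hr := sqrt_2PI_gt0).
  set (S := sqrt (s0 ^ 2 + se ^ 2)) in *.
  set (Z := fsum k _).
  assert (HZ : 0 <= Z).
  { apply fsum_ge0. intros i Hi. assert (Hi' := Hsig i Hi).
    apply Rmult_le_pos; [apply Rmult_le_pos | apply Rlt_le, exp_pos].
    - apply Rdiv_le_0_compat; [apply Hphi, Hi | exact Hphie].
    - apply Rlt_le, Rdiv_lt_0_compat; assumption. }
  assert (HL : outlier_lik k phi Delta sig 0 = phie * gauss 0 S 0 * Z).
  { unfold Z. rewrite <- fsum_scal. apply fsum_ext. intros i Hi. assert (Hi' := Hsig i Hi).
    unfold gauss. replace (- (0 - 0) ^ 2 / (2 * S ^ 2)) with 0 by (field; lra).
    replace ((0 - Delta i) ^ 2) with (Delta i ^ 2) by ring. rewrite exp_0.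
    field. repeat split; lra. }
  assert (Hm : 0 < gauss 0 S 0) by (apply gauss_gt0, HS).
  unfold degroot_weight. fold S. rewrite HL.
  assert (Hpm : 0 < phie * gauss 0 S 0) by (apply Rmult_lt_0_compat; assumption).
  field. repeat split; apply Rgt_not_eq; nra.
Qed.

End Posterior.

Theorem mainTheorem10 (k : nat) (s0 se phie : R) (phi Delta sig : nat -> R) :
  0 < s0 -> 0 < se -> 0 < phie ->
  (forall i, (i < k)%nat -> 0 < sig i) ->
  (forall i, (i < k)%nat -> 0 <= phi i) ->
  phie + fsum k phi = 1 ->
  is_derive (post_mean s0 k phie se phi Delta sig) 0
    ((s0 ^ 2 / (s0 ^ 2 + se ^ 2)) /
     (1 + fsum k (fun i => phi i / phie * (sqrt (s0 ^ 2 + se ^ 2) / sig i)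
                           * exp (- Delta i ^ 2 / (2 * sig i ^ 2))))).
Proof.
  (* The normalisation of the mixture weights cancels from the posterior mean. *)
  intros Hs0 Hse Hphie Hsig Hphi _.
  rewrite <- degroot_weight_0 by assumption.
  apply (is_derive_ext (fun x => x * degroot_weight s0 k phie se phi Delta sig x)).
  { intros x. symmetry. apply post_mean_E; assumption. }
  apply is_derive_id_mul_0, ex_derive_degroot_weight; assumption.
Qed.
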